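(* Let $G$ be a signed cyclic graph and let $D_G$ be one of the virtual link diagrams associated with $G$ via the medial construction. Then $F[G](A,B,d)=\langle D_G\rangle(A,B,d)$.
   Context: A signed cyclic graph is a finite graph with a cyclic ordering of half-edges at each vertex (equivalently an orientable ribbon graph $\mathbf{G}_r$: vertex discs with edge ribbons attached in the given cyclic order) and a sign $\pm$ on each edge. Medial construction: embed $G$ cellularly in a closed oriented surface, place a real crossing at the midpoint of each edge $e$ and join crossings around faces; for positive $e$ the $B$-smoothing of the crossing separates the sides along $e$ (following the vertex boundaries) and the $A$-smoothing connects across $e$, for negative $e$ the roles are exchanged. Generically immersing in the plane with immersion artefacts as virtual crossings gives the virtual link diagrams associated with $G$. Bracket polynomial: for a virtual link diagram $D$, $\langle D\rangle(A,B,d)=\sum_{\sigma}A^{\alpha(\sigma)}B^{\beta(\sigma)}d^{|\sigma|-1}$, the sum over all states $\sigma$ (choices of $A$- or $B$-smoothing at every real crossing, virtual crossings left as is), $\alpha(\sigma),\beta(\sigma)$ the numbers of $A$- and $B$-smoothings, $|\sigma|$ the number of closed curves. The polynomial $F[G]$: edges may be ''marked''. For an edge $e$, $G-e$ deletes $e$ and $G(\bar e)$ keeps $e$ and marks it. Then $F[G]=B\,F[G-e]+A\,F[G(\bar e)]$ if $e$ is positive and $F[G]=A\,F[G-e]+B\,F[G(\bar e)]$ if $e$ is negative (applied to unmarked edges); and if $H$ is a spanning subgraph of $G$ (all vertices, a subset of edges with the induced cyclic order) all of whose edges are marked, $F[H]=d^{bc(H)-1}$, where $bc(H)$ is the number of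 boundary components of the ribbon graph $\mathbf{H}_r$ of $H$. *)

From mathcomp Require Import all_boot all_order all_algebra all_fingroup.
Set Implicit Arguments. Unset Strict Implicit. Unset Printing Implicit Defensive.
Import GRing.Theory.
Local Open Scope ring_scope.

(** * Signed cyclic graphs (orientable ribbon graphs given by rotation systems)

    Vertices [V], edges [E]; the half-edges are [E * bool] ((e,b) is the end
    [b] of edge [e]), [ends h] is the vertex incident to half-edge [h],
    [rot] is the cyclic (counterclockwise) successor of a half-edge around its
    vertex, and [sgn e = true] iff the edge [e] is positive.  Loops and
    multiple edges are allowed. *)

Section SignedCyclicGraph.
Variables (V E : finType) (ends : E * bool -> V) (rot : {perm E * bool}).

Definition is_rotation : Prop :=
  forall h h' : E * bool, (ends h == ends h') = fconnect rot h h'.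

Definition flip (h : E * bool) : E * bool := (h.1, ~~ h.2).

(** Induced cyclic order on the spanning subgraph with edge set [S]: the next
    half-edge (in the rotation at the vertex) whose edge belongs to [S]. *)
Definition rot_next (S : {set E}) (h : E * bool) : E * bool :=
  let l := [seq (rot ^+ n.+1)%g h | n <- iota 0 #|{: E * bool}|] in
  nth h l (find (fun x : E * bool => x.1 \in S) l).

(** boundary-tracing permutation of the ribbon subgraph [S] *)
Definition face_step (S : {set E}) (h : E * bool) : E * bool :=
  rot_next S (flip h).

(** number of boundary components of the ribbon graph of the spanning
    subgraph with edge set [S]: boundary cycles through half-edges of [S],
    plus one boundary circle for every vertex isolated in [S]. *)
Definition bc (S : {set E}) : nat :=
  #|[set [set y | fconnect (face_step S) x y] | x in [set h : E * bool | h.1 \in S]]|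
  + #|[set v : V | [forall h : E * bool, (h.1 \in S) ==> (ends h != v)]]|.

(** The polynomial F[G], computed by the deletion / marking recursion,
    applied to the unmarked edges in the order [enum E].  [S] is the current
    set of (not deleted) edges; edges of [S] not in [todo] are marked. *)
Variables (sgn : E -> bool) (R : comUnitRingType) (A B d : R).

Fixpoint Frec (S : {set E}) (todo : seq E) : R :=
  match todo with
  | [::] => d ^ ((bc S)%:Z - 1)
  | e :: t =>
      if sgn e then B * Frec (S :\ e) t + A * Frec S t
      else A * Frec (S :\ e) t + B * Frec S t
  end.

Definition Fpoly : R := Frec [set: E] (enum E).

End SignedCyclicGraph.

(** * Virtual link diagrams (Gauss data)

    A virtual link diagram is represented by its real crossings [C], at each
    crossing the four endpoints [(c, i)], [i : 'I_4], numbered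
    counterclockwise so that [0] and [2] are the ends of the over-strand,
    the arcs of the diagram as a matching [arc] of these endpoints
    (running through virtual crossings, which are forgotten), and a number
    [nfree] of closed components without real crossings. *)

Section Bracket.
Variables (C : finType) (arc : C * 'I_4 -> C * 'I_4) (nfree : nat).

(** the smoothing at a crossing: [true] = A-smoothing, joining the
    A-regions (those swept by turning the over-strand counterclockwise,
    i.e. between endpoints 0,1 and between 2,3): arcs {1,2},{3,0};
    [false] = B-smoothing: arcs {0,1},{2,3}. *)
Definition smooth_partner (a : bool) (i : 'I_4) : 'I_4 :=
  if a then @inord 3 ((3 - i)%N) else @inord 3 ((i + (if odd i then 3 else 1)) %% 4)%N.

Definition state_rel (s : {ffun C -> bool}) : rel (C * 'I_4) :=
  fun x y =>
    [|| arc x == y, arc y == x,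
        y == (x.1, smooth_partner (s x.1) x.2) | x == (y.1, smooth_partner (s y.1) y.2)].

Definition ncurves (s : {ffun C -> bool}) : nat :=
  #|[set [set y | connect (state_rel s) x y] | x : C * 'I_4]| + nfree.

Variables (R : comUnitRingType) (A B d : R).

Definition bracket : R :=
  \sum_(s : {ffun C -> bool})
     A ^+ #|[set c | s c]| * B ^+ #|[set c | ~~ s c]| * d ^ ((ncurves s)%:Z - 1).

End Bracket.

(** * The medial construction

    Crossing of the medial diagram = edge [e] of [G].  With [h = (e,false)]
    (at vertex v) and [h' = (e,true)] (at vertex w), the four arcs leaving
    the crossing go to the corners next to the half-edges; [(h, true)] is
    the side towards the corner (h, rot h) ("after" h) and [(h, false)] the
    side towards the corner (rot^-1 h, h) ("before" h).  Counterclockwise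
    around the midpoint of [e] these are
      p0 = (h',before), p1 = (h,after), p2 = (h,before), p3 = (h',after).
    The corner (h, rot h) gives an arc from (h,after) to (rot h, before).
    For a negative edge the over-strand is {p0,p2}; then the A-smoothing
    {p1,p2},{p3,p0} follows the vertex boundaries (separates the two sides of
    e) and the B-smoothing {p0,p1},{p2,p3} runs along the sides of e
    (connects across e).  For a positive edge the roles are exchanged:
    the over-strand is {p1,p3} (labels shifted by one). *)

Section Medial.
Variables (V E : finType) (ends : E * bool -> V) (rot : {perm E * bool})
  (sgn : E -> bool).

Definition mshift (e : E) : nat := if sgn e then 1 else 0.

Definition pos_of (j : nat) (e : E) : (E * bool) * bool :=
  match j with
  | 0 => ((e, true), false)
  | 1 => ((e, false), true)
  | 2 => ((e, false), false)
  | _ => ((e, true), true)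
  end.

Definition pidx (b s : bool) : nat :=
  match b, s with
  | true, false => 0 | false, true => 1 | false, false => 2 | true, true => 3
  end.

Definition mlab (x : E * 'I_4) : (E * bool) * bool :=
  pos_of ((x.2 + mshift x.1) %% 4) x.1.

Definition munlab (p : (E * bool) * bool) : E * 'I_4 :=
  (p.1.1, @inord 3 ((pidx p.1.2 p.2 + 4 - mshift p.1.1) %% 4)).

Definition medial_arc (x : E * 'I_4) : E * 'I_4 :=
  let p := mlab x in
  if p.2 then munlab (rot p.1, false) else munlab ((rot^-1)%g p.1, true).

(** one free circle for each isolated vertex *)
Definition medial_nfree : nat := #|[set v : V | [forall h : E * bool, ends h != v]]|.

(** [D = (C, arc, nfree)] is a virtual link diagram associated with G: up to
    renaming the crossings (a bijection with the edges of G) and choosing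
    which over-strand end is labelled 0, its Gauss data is the medial one. *)
Definition associated (C : finType) (arc : C * 'I_4 -> C * 'I_4) (nfree : nat)
  : Prop :=
  nfree = medial_nfree /\
  exists (phi : C -> E) (fl : C -> bool),
    bijective phi /\
    let tr (x : C * 'I_4) : E * 'I_4 :=
      (phi x.1, @inord 3 ((x.2 + (if fl x.1 then 2 else 0)) %% 4)) in
    forall x, medial_arc (tr x) = tr (arc x).

End Medial.

(* Unrolling the deletion/marking recursion writes F[G] as a sum over the sets K of kept edges,
   with weight A or B per edge and the factor d^(bc K - 1).  Keeping an edge corresponds to the
   smoothing of its crossing that connects across the edge, which carries the same weight, so it
   remains to match the curves of a state with the boundary components of K.  Label each endpoint
   of a crossing by the corner side it runs to.  A state curve then runs around a vertex from one
   side to the next and crosses over along each kept ribbon, i.e. it follows the boundary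
   permutation of the ribbon subgraph K; at a vertex without kept edges it closes up into the
   boundary circle of that vertex, and the isolated vertices of G give the free circles. *)

From mathcomp Require Import all_boot all_order all_algebra all_fingroup.
Set Implicit Arguments. Unset Strict Implicit. Unset Printing Implicit Defensive.
Import GRing.Theory.

Section StateSum.
Variables (V E : finType) (ends : E * bool -> V) (rot : {perm E * bool}) (sgn : E -> bool).
Variables (R : comUnitRingType) (A B d : R).
Local Open Scope ring_scope.

Definition edge_weight (e : E) (keep : bool) : R := if sgn e == keep then A else B.

Definition keeps_outside (t : seq E) (f : {ffun E -> bool}) : bool :=
  [forall e, (e \notin t) ==> f e].

Definition toggle (e : E) (f : {ffun E -> bool}) : {ffun E -> bool} :=
  [ffun x => if x == e then ~~ f x else f x].

Lemma toggleK e : involutive (toggle e).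
Proof. by move=> f; apply/ffunP => x; rewrite !ffunE; case: eqP; rewrite ?negbK. Qed.

Lemma keeps_outside_cons e t f :
  e \notin t -> keeps_outside t f = keeps_outside (e :: t) f && f e.
Proof.
move=> et; apply/forallP/andP => [keep_f | [/forallP keep_f fe] x].
  split; last by have := keep_f e; rewrite et.
  apply/forallP => x; rewrite in_cons negb_or; apply/implyP => /andP [_].
  exact: (implyP (keep_f x)).
case: (eqVneq x e) => [-> | ne]; first by rewrite fe implybT.
by have := keep_f x; rewrite in_cons (negbTE ne).
Qed.

Lemma keeps_outside_toggle e t f :
  e \notin t -> keeps_outside t (toggle e f) = keeps_outside (e :: t) f && ~~ f e.
Proof.
move=> et; rewrite (keeps_outside_cons _ et) /toggle ffunE eqxx; congr andb.
apply: eq_forallb => x; rewrite ffunE in_cons.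
by case: eqP => [-> | _]; rewrite ?eqxx ?implybT.
Qed.

Lemma Frec_cons S e t :
  Frec ends rot sgn A B d S (e :: t) =
  edge_weight e false * Frec ends rot sgn A B d (S :\ e) t
  + edge_weight e true * Frec ends rot sgn A B d S t.
Proof. by rewrite /= /edge_weight; case: (sgn e). Qed.

(* Only the edges of [t] are still free; the others are kept exactly when they lie in [S]. *)
Lemma Frec_state_sum S t : uniq t ->
  Frec ends rot sgn A B d S t =
  \sum_(f | keeps_outside t f)
     (\prod_(e <- t) edge_weight e (f e)) * d ^ ((bc ends rot (S :&: [set e | f e]))%:Z - 1).
Proof.
elim: t S => [|e t IH] S.
  move=> _ /=; rewrite (big_pred1 [ffun => true]) ?big_nil ?mul1r.
    by congr (_ ^ (_%:Z - _)); congr bc; apply/setP => x; rewrite !inE ffunE andbT.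
  move=> f; apply/forallP/eqP => [keep_f | -> x]; last by rewrite ffunE implybT.
  by apply/ffunP => x; rewrite ffunE; apply: (implyP (keep_f x)).
case/andP => et ut.
rewrite Frec_cons (bigID (fun f : {ffun E -> bool} => f e)) /= addrC !IH // !mulr_sumr.
congr (_ + _).
  rewrite (reindex_inj (inv_inj (toggleK e))) /=; apply: eq_big => f.
    by rewrite keeps_outside_toggle.
  rewrite keeps_outside_toggle // => /andP [_ Nfe].
  rewrite big_cons (negbTE Nfe) mulrA; congr (_ * _ * _).
    apply: eq_big_seq => x xt; rewrite /toggle ffunE; case: eqP => // xe.
    by rewrite -xe xt in et.
  congr (_ ^ (_%:Z - _)); congr bc; apply/setP => x; rewrite !inE /toggle ffunE.
  by case: eqP => [-> | _]; rewrite ?(negbTE Nfe) ?andbF.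
apply: eq_big => f; first by rewrite (keeps_outside_cons _ et).
by rewrite (keeps_outside_cons _ et) => /andP [_ fe]; rewrite big_cons fe mulrA.
Qed.

Lemma Fpoly_state_sum : Fpoly ends rot sgn A B d =
  \sum_(f : {ffun E -> bool})
     (\prod_(e : E) edge_weight e (f e)) * d ^ ((bc ends rot [set e | f e])%:Z - 1).
Proof.
rewrite /Fpoly Frec_state_sum ?enum_uniq //; apply: eq_big => f.
  by apply/forallP => x; rewrite mem_enum.
by move=> _; rewrite big_enum setTI.
Qed.
End StateSum.

Definition smooth_side (E : finType) (k : bool) (p : (E * bool) * bool) : (E * bool) * bool :=
  (if k then flip p.1 else p.1, ~~ p.2).

Section RibbonSubgraph.
Variables (V E : finType) (ends : E * bool -> V) (rot : {perm E * bool}).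
Hypothesis rot_ends : is_rotation ends rot.
Variable K : {set E}.

Definition kept (h : E * bool) : bool := h.1 \in K.

Definition kept_at (h : E * bool) : bool := [exists g, kept g && (ends g == ends h)].

Definition first_kept_after (h : E * bool) (m : nat) : Prop :=
  kept ((rot ^+ m.+1)%g h) /\ forall j, j < m -> ~~ kept ((rot ^+ j.+1)%g h).

Lemma ends_rot h : ends (rot h) = ends h.
Proof. by apply/esym/eqP; rewrite rot_ends fconnect1. Qed.

Lemma ends_rotV h : ends ((rot^-1)%g h) = ends h.
Proof. by rewrite -{2}(permKV rot h) ends_rot. Qed.

Lemma ends_rotX n h : ends ((rot ^+ n)%g h) = ends h.
Proof. by elim: n => [|n IH]; rewrite ?expg0 ?perm1 // expgSr permM ends_rot. Qed.

Lemma permXS n h : (rot ^+ n.+1)%g h = (rot ^+ n)%g (rot h).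
Proof. by rewrite expgS permM. Qed.

Lemma kept_at_rot h : kept_at (rot h) = kept_at h.
Proof. by apply: eq_existsb => g; rewrite ends_rot. Qed.

Lemma kept_at_rotV h : kept_at ((rot^-1)%g h) = kept_at h.
Proof. by rewrite -{2}(permKV rot h) kept_at_rot. Qed.

Lemma kept_at_iter n h : kept_at (iter n rot h) = kept_at h.
Proof. by elim: n => //= n IH; rewrite kept_at_rot. Qed.

Lemma kept_kept_at h : kept h -> kept_at h.
Proof. by move=> hK; apply/existsP; exists h; rewrite hK eqxx. Qed.

Lemma first_kept_after_uniq h m m' :
  first_kept_after h m -> first_kept_after h m' -> m = m'.
Proof.
case=> Km before_m [Km' before_m']; case: (ltngtP m m') => // lt.
  by move: (before_m' _ lt); rewrite Km.
by move: (before_m _ lt); rewrite Km'.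
Qed.

Lemma rot_next_spec h : kept_at h ->
  exists2 m, first_kept_after h m & rot_next rot K h = (rot ^+ m.+1)%g h.
Proof.
case/existsP=> g /andP [gK /eqP eg].
have : fconnect rot (rot h) g by rewrite -rot_ends ends_rot eg.
rewrite fconnect_orbit => /trajectP [i lti g_def].
have ltiN : i < #|{: E * bool}| by apply: leq_trans lti (max_card _).
rewrite /rot_next; set l := [seq _ | n <- _]; set P := fun x : E * bool => _.
have nthE k : k < #|{: E * bool}| -> nth h l k = (rot ^+ k.+1)%g h.
  by move=> ltk; rewrite (nth_map 0) ?size_iota // nth_iota.
have has_l : has P l.
  apply/hasP; exists ((rot ^+ i.+1)%g h); first by apply/mapP; exists i; rewrite ?mem_iota.
  by rewrite /P expgS permM permX -g_def.
have lt_find : find P l < #|{: E * bool}|.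
  by move: has_l; rewrite has_find size_map size_iota.
exists (find P l); last exact: nthE.
split; first by rewrite -nthE //; exact: nth_find.
move=> j ltj; rewrite -nthE; last exact: ltn_trans lt_find.
by apply/negbT; exact: before_find ltj.
Qed.

Lemma rot_nextE h m : first_kept_after h m -> rot_next rot K h = (rot ^+ m.+1)%g h.
Proof.
move=> hm; have [|m0 hm0 ->] := rot_next_spec (h := h).
  by case: hm => Km _; apply/existsP; exists ((rot ^+ m.+1)%g h); rewrite Km ends_rotX eqxx.
by rewrite (first_kept_after_uniq hm0 hm).
Qed.

Lemma rot_next_kept h : kept_at h -> kept (rot_next rot K h).
Proof. by case/rot_next_spec=> m [] Km _ ->. Qed.

Lemma rot_next_rot h : kept_at h ->
  rot_next rot K h = if kept (rot h) then rot h else rot_next rot K (rot h).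
Proof.
case/rot_next_spec=> -[|m] [Km before_m] ->.
  by rewrite expg1 in Km *; rewrite Km.
have Nrh : ~~ kept (rot h) by have := before_m 0 isT; rewrite expg1.
rewrite (negbTE Nrh) (@rot_nextE _ m); first exact: permXS.
by split=> [|j ltj]; rewrite -permXS // before_m.
Qed.

Lemma rot_next_inj : {in kept &, injective (rot_next rot K)}.
Proof.
suff le_inj g g' m m' : m <= m' -> kept g -> first_kept_after g' m' ->
    (rot ^+ m.+1)%g g = (rot ^+ m'.+1)%g g' -> g = g'.
  move=> g g' gK g'K.
  have [m gm ->] := rot_next_spec (kept_kept_at gK).
  have [m' g'm' ->] := rot_next_spec (kept_kept_at g'K).
  case: (leqP m m') => [le_mm' | /ltnW le_m'm] Eg; first exact: le_inj Eg.
  by apply/esym; apply: le_inj le_m'm g'K gm (esym Eg).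
move=> le_mm' gK [_ before_m'] Eg.
have g_def : g = (rot ^+ (m' - m))%g g'.
  apply: (@perm_inj _ (rot ^+ m.+1)%g); rewrite Eg -permM -expgD.
  by rewrite addnS subnK.
case Em: (m' - m) g_def => [|j] g_def; first by rewrite g_def expg0 perm1.
have ltj : j < m' by rewrite -ltnS -Em ltnS leq_subr.
by move: (before_m' j ltj); rewrite -g_def gK.
Qed.

Notation face := (face_step rot K).

Lemma flipK : involutive (@flip E).
Proof. by case=> e b; rewrite /flip /= negbK. Qed.

Lemma face_kept h : kept h -> kept (face h).
Proof. by move=> hK; apply: rot_next_kept; apply: kept_kept_at. Qed.

Lemma face_inj : {in kept &, injective face}.
Proof. by move=> x y xK yK /rot_next_inj /(can_inj flipK); apply. Qed.

Lemma fconnect_face_sym x y : kept x -> kept y -> fconnect face x y = fconnect face y x.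
Proof. exact: (@fconnect_sym_in _ face kept face_kept face_inj). Qed.

Lemma face_orbit_step h : kept h ->
  [set y | fconnect face h y] = [set y | fconnect face (face h) y].
Proof.
move=> hK; apply/setP => y; rewrite !inE; apply/idP/idP => hy.
  by apply: connect_trans hy; rewrite fconnect_face_sym ?face_kept ?fconnect1.
exact: connect_trans (fconnect1 _ h) hy.
Qed.

Definition corner_arc (p : (E * bool) * bool) : (E * bool) * bool :=
  if p.2 then (rot p.1, false) else ((rot^-1)%g p.1, true).

Definition smooth_kept (p : (E * bool) * bool) := smooth_side (kept p.1) p.

Definition side_rel : rel ((E * bool) * bool) := fun p q =>
  [|| corner_arc p == q, corner_arc q == p, q == smooth_kept p | p == smooth_kept q].

Definition boundary_start (p : (E * bool) * bool) : E * bool :=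
  if ~~ p.2 && kept p.1 then p.1 else rot_next rot K p.1.

(* A side at a vertex with kept half-edges lies on the boundary cycle of the face permutation
   through [boundary_start p]; the sides at a vertex without kept half-edges make up the
   boundary circle of that vertex. *)
Definition boundary_of (p : (E * bool) * bool) : {set E * bool} + V :=
  if kept_at p.1 then inl [set y | fconnect face (boundary_start p) y]
  else inr (ends p.1).

Lemma boundary_start_kept p : kept_at p.1 -> kept (boundary_start p).
Proof. by rewrite /boundary_start; case: ifP => [/andP[] | _ /rot_next_kept]. Qed.

Lemma boundary_of_corner_arc p : boundary_of (corner_arc p) = boundary_of p.
Proof.
case: p => h [|]; rewrite /boundary_of /corner_arc /boundary_start /=.
  rewrite kept_at_rot ends_rot; case: ifP => // hK.
  by rewrite (rot_next_rot hK); case: ifP.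
rewrite kept_at_rotV ends_rotV; case: ifP => // hK.
by rewrite (rot_next_rot _) ?kept_at_rotV // permKV; case: ifP.
Qed.

Lemma boundary_of_smooth_kept p : boundary_of (smooth_kept p) = boundary_of p.
Proof.
case: p => h b; rewrite /boundary_of /smooth_kept /boundary_start /=.
case hK: (kept h) => /=; last by rewrite hK !andbF.
rewrite !kept_kept_at //; congr inl.
have fK : kept (flip h) by [].
case: b => /=; rewrite ?hK ?fK /=; last exact/esym/face_orbit_step.
by rewrite (@face_orbit_step (flip h)) // /face_step flipK.
Qed.

Lemma side_rel_sym : symmetric side_rel.
Proof. by move=> p q; rewrite /side_rel; apply/idP/idP; case/or4P => ->; rewrite ?orbT. Qed.

Lemma connect_boundary_of p q : connect side_rel p q -> boundary_of p = boundary_of q.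
Proof.
case/connectP=> s pth ->; elim: s p pth => //= r s IH p /andP [pr pth].
rewrite -IH //; case/or4P: pr => [/eqP<- | /eqP<- | /eqP-> | /eqP->];
  by rewrite ?boundary_of_corner_arc ?boundary_of_smooth_kept.
Qed.

Lemma connect_corner_arc p : connect side_rel p (corner_arc p).
Proof. by apply: connect1; rewrite /side_rel eqxx. Qed.

Lemma connect_smooth_kept p : connect side_rel p (smooth_kept p).
Proof. by apply: connect1; rewrite /side_rel eqxx !orbT. Qed.

Lemma connect_rot_next h : kept_at h -> connect side_rel (h, true) (rot_next rot K h, false).
Proof.
case/rot_next_spec=> m [_ before_m] ->.
suff walk j : j <= m -> connect side_rel (h, true) ((rot ^+ j.+1)%g h, false) by apply: walk.
elim: j => [|j IH] le_jm; first by rewrite expg1; apply: connect_corner_arc.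
apply: connect_trans (IH (ltnW le_jm)) _.
apply: connect_trans (connect_smooth_kept _) _.
rewrite /smooth_kept /smooth_side /= (negbTE (before_m j le_jm)).
by rewrite [(rot ^+ j.+2)%g]expgSr permM; apply: connect_corner_arc.
Qed.

Lemma connect_boundary_start p : kept_at p.1 -> connect side_rel p (boundary_start p, false).
Proof.
case: p => h [|] /= hK; rewrite /boundary_start /=; first exact: connect_rot_next.
case: ifP => Kh; first exact: connect0.
apply: connect_trans (connect_smooth_kept _) _.
by rewrite /smooth_kept /smooth_side /= Kh; apply: connect_rot_next.
Qed.

Lemma connect_face h h' : kept h -> fconnect face h h' -> connect side_rel (h, false) (h', false).
Proof.
move=> hK /iter_findex <-; elim: (findex _ _ _) => [|n IH]; first exact: connect0.
apply: connect_trans IH _; rewrite iterS.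
have iterK : kept (iter n face h) by elim: n => //= n IHn; apply: face_kept.
apply: connect_trans (connect_smooth_kept _) _.
by rewrite /smooth_kept /smooth_side /= iterK; apply/connect_rot_next/kept_kept_at.
Qed.

Lemma connect_isolated_sides h h' b b' :
  ~~ kept_at h -> ends h = ends h' -> connect side_rel (h, b) (h', b').
Proof.
have local g c c' : ~~ kept_at g -> connect side_rel (g, c) (g, c').
  move=> Ng; have Kg : ~~ kept g by apply: contra Ng; apply: kept_kept_at.
  case: (eqVneq c c') => [-> | ne]; first exact: connect0.
  apply: connect_trans (connect_smooth_kept _) _.
  by rewrite /smooth_kept /smooth_side /= (negbTE Kg); case: c c' ne => -[].
move=> Nh /eqP; rewrite rot_ends => /iter_findex <-.
elim: (findex _ _ _) b' => [|n IH] b'; first exact: local.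
apply: connect_trans (IH true) _; apply: connect_trans (connect_corner_arc _) _.
by rewrite /corner_arc /= -iterS; apply: local; rewrite kept_at_iter.
Qed.

Lemma connect_sideE p q : connect side_rel p q = (boundary_of p == boundary_of q).
Proof.
apply/idP/eqP; first exact: connect_boundary_of.
rewrite /boundary_of; case hp: (kept_at p.1); case hq: (kept_at q.1) => // -[eq_pq].
  have pq : fconnect face (boundary_start p) (boundary_start q).
    by have := connect0 (frel face) (boundary_start q); rewrite -!inE -eq_pq inE.
  apply: connect_trans (connect_boundary_start hp) _.
  apply: connect_trans (connect_face (boundary_start_kept hp) pq) _.
  by rewrite (sym_connect_sym side_rel_sym); apply: connect_boundary_start.
by case: p q hp hq eq_pq => [h b] [h' b'] /= /negbT hp _; apply: connect_isolated_sides.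
Qed.

Let faces := [set [set y | fconnect face x y] | x in [set h : E * bool | h.1 \in K]].
Let isolated_in_K := [set v : V | [exists h, ends h == v] && [forall h, kept h ==> (ends h != v)]].

Lemma boundary_of_imset :
  [set boundary_of p | p : (E * bool) * bool] = inl @: faces :|: inr @: isolated_in_K.
Proof.
apply/setP => z; apply/imsetP/setUP.
  case=> p _ ->; rewrite /boundary_of; case: ifP => pK.
    left; apply/imsetP; exists [set y | fconnect face (boundary_start p) y] => //.
    by apply/imsetP; exists (boundary_start p); rewrite // inE; apply: boundary_start_kept.
  right; apply/imsetP; exists (ends p.1) => //; rewrite inE; apply/andP; split.
    by apply/existsP; exists p.1.
  apply/forallP => h; apply/implyP => hK; apply: contraFN pK => /eqP eh.
  by apply/existsP; exists h; rewrite hK eh /=.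
case=> [/imsetP [_ /imsetP [h hK ->] ->] | /imsetP [v vW ->]].
  rewrite inE in hK; exists (h, false) => //.
  by rewrite /boundary_of /boundary_start /= (kept_kept_at hK) /kept hK.
rewrite inE in vW; case/andP: vW => /existsP [h /eqP eh] /forallP Nv.
exists (h, true) => //; rewrite /boundary_of /= eh; case: ifP => // /existsP [g /andP [gK /eqP eg]].
by move: (Nv g); rewrite gK eg eh eqxx.
Qed.

Lemma card_boundaries :
  #|[set boundary_of p | p : (E * bool) * bool]| + #|[set v : V | [forall h, ends h != v]]|
  = bc ends rot K.
Proof.
rewrite boundary_of_imset cardsU (_ : _ :&: _ = set0) ?cards0 ?subn0; last first.
  by apply/setP => z; rewrite !inE; apply/negbTE/andP => -[/imsetP [? _ ->] /imsetP [? _]].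
rewrite [X in X + _ + _ = _]card_imset ?[X in _ + X + _ = _]card_imset;
  try by move=> x y [->].
rewrite /bc -addnA; congr addn.
rewrite -(cardsID [set v : V | [exists h, ends h == v]]
                  [set v : V | [forall h : E * bool, (h.1 \in K) ==> (ends h != v)]]).
congr addn; apply: eq_card => v; rewrite !inE; first by rewrite andbC.
rewrite negb_exists; apply/forallP/andP => [Nv | [/forallP NvK /forallP Nv] h].
  by split; apply/forallP => h; rewrite ?(negbTE (Nv h)) ?implybT ?Nv.
by rewrite ?NvK ?Nv.
Qed.
End RibbonSubgraph.

Section MedialLabels.
Variables (E : finType) (sgn : E -> bool).

Lemma munlabK : cancel (mlab sgn) (munlab sgn).
Proof.
case=> e [[|[|[|[|i]]]] lti] //; rewrite /mlab /munlab /mshift /=;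
  case hs: (sgn e); rewrite /= ?hs /=; congr pair; apply: val_inj; rewrite /= inordK //.
Qed.

Lemma mlabK : cancel (munlab sgn) (mlab sgn).
Proof.
by case=> [[e b] s]; rewrite /mlab /munlab /mshift /=;
  case hs: (sgn e); case: b; case: s; rewrite /= ?hs /= inordK.
Qed.

Lemma mlab_edge x : (mlab sgn x).1.1 = x.1.
Proof. by rewrite /mlab; case: (_ %% 4)%N => [|[|[|]]]. Qed.

Definition turn (fl : bool) (i : 'I_4) : 'I_4 := inord ((i + (if fl then 2 else 0)) %% 4).

Lemma turnK fl : involutive (turn fl).
Proof. by case=> [[|[|[|[|i]]]] lti] //; apply: val_inj; case: fl; rewrite /turn /= !inordK. Qed.

Lemma mlab_smooth e fl a i :
  mlab sgn (e, turn fl (smooth_partner a i)) = smooth_side (a == sgn e) (mlab sgn (e, turn fl i)).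
Proof.
case: i => [[|[|[|[|i]]]] lti] //; rewrite /mlab /smooth_side /turn /smooth_partner /mshift /=;
  case hs: (sgn e); case: a; case: fl; rewrite /= ?hs /= !inordK //.
Qed.

Lemma mlab_medial_arc rot y : mlab sgn (medial_arc rot sgn y) = corner_arc rot (mlab sgn y).
Proof. by rewrite /medial_arc /corner_arc; case: (mlab sgn y) => h [|]; rewrite mlabK. Qed.
End MedialLabels.

Lemma connect_homo (T U : finType) (f : T -> U) (r : rel T) (r' : rel U) :
  (forall x y, r x y -> r' (f x) (f y)) -> forall x y, connect r x y -> connect r' (f x) (f y).
Proof.
move=> homo_f x y /connectP [p pth ->]; elim: p x pth => [|z p IH] x /=.
  by rewrite connect0.
case/andP=> rxz pth; apply: connect_trans (connect1 (homo_f _ _ rxz)) (IH _ pth).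
Qed.

Lemma connect_bij (T U : finType) (f : T -> U) (r : rel T) (r' : rel U) :
  bijective f -> (forall x y, r' (f x) (f y) = r x y) ->
  forall x y, connect r' (f x) (f y) = connect r x y.
Proof.
case=> g fK gK r'E x y; apply/idP/idP; last by apply: connect_homo => a b; rewrite r'E.
by rewrite -{2}(fK x) -{2}(fK y); apply: connect_homo => a b; rewrite -r'E !gK.
Qed.

Lemma card_connect_classes (T U : finType) (r : rel T) (g : T -> U) :
  (forall x y, connect r x y = (g x == g y)) ->
  #|[set [set y | connect r x y] | x : T]| = #|[set g x | x : T]|.
Proof.
move=> rE; have classE x : [set y | connect r x y] = g @^-1: [set g x].
  by apply/setP => y; rewrite !inE rE eq_sym.
rewrite (eq_imset _ classE) (imset_comp (fun u => g @^-1: [set u]) g) card_in_imset //.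
move=> _ _ /imsetP [x _ ->] /imsetP [y _ ->] /setP /(_ x).
by rewrite !inE eqxx => /esym/eqP.
Qed.

Section AssociatedDiagram.
Variables (V E : finType) (ends : E * bool -> V) (rot : {perm E * bool}) (sgn : E -> bool).
Hypothesis rot_ends : is_rotation ends rot.
Variables (C : finType) (arc : C * 'I_4 -> C * 'I_4) (phi : C -> E) (fl : C -> bool).
Hypothesis phi_bij : bijective phi.

Definition crossing_side (x : C * 'I_4) : (E * bool) * bool :=
  mlab sgn (phi x.1, turn (fl x.1) x.2).

Hypothesis arc_medial : forall x,
  medial_arc rot sgn (phi x.1, turn (fl x.1) x.2) = (phi (arc x).1, turn (fl (arc x).1) (arc x).2).

Lemma crossing_side_bij : bijective crossing_side.
Proof.
have [psi phiK psiK] := phi_bij.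
pose uncross (y : E * 'I_4) := (psi y.1, turn (fl (psi y.1)) y.2).
exists (uncross \o munlab sgn) => [[c i] | p]; rewrite /comp /crossing_side.
  by rewrite munlabK /uncross /= phiK turnK.
by case: (munlab sgn p) (mlabK sgn p) => e i <-; rewrite /uncross /= psiK turnK.
Qed.

Lemma crossing_side_arc x : crossing_side (arc x) = corner_arc rot (crossing_side x).
Proof. by rewrite /crossing_side -arc_medial mlab_medial_arc. Qed.

(* Keeping an edge is the smoothing that connects across it: the A-smoothing of a
   positive edge, the B-smoothing of a negative one. *)
Definition medial_state (f : {ffun E -> bool}) : {ffun C -> bool} :=
  [ffun c => f (phi c) == sgn (phi c)].

Lemma medial_state_bij : bijective medial_state.
Proof.
have [psi phiK psiK] := phi_bij.
exists (fun s : {ffun C -> bool} => [ffun e => s (psi e) == sgn e]) => [f | s].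
  all: apply/ffunP => x; rewrite !ffunE.
  by rewrite psiK; case: (f x); case: (sgn x).
by rewrite phiK; case: (s x); case: (sgn (phi x)).
Qed.

Lemma crossing_side_smooth f x :
  crossing_side (x.1, smooth_partner (medial_state f x.1) x.2)
  = smooth_kept [set e | f e] (crossing_side x).
Proof.
rewrite /crossing_side /smooth_kept /kept mlab_smooth mlab_edge inE ffunE.
by case: (f _); case: (sgn _).
Qed.

Lemma state_rel_medial f x y :
  state_rel arc (medial_state f) x y
  = side_rel rot [set e | f e] (crossing_side x) (crossing_side y).
Proof.
have side_inj := bij_inj crossing_side_bij.
by rewrite /side_rel -!crossing_side_arc -!crossing_side_smooth !(inj_eq side_inj).
Qed.

Lemma ncurves_medial f :
  ncurves arc (medial_nfree ends) (medial_state f) = bc ends rot [set e | f e].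
Proof.
rewrite /ncurves -card_boundaries //; congr addn.
rewrite (card_connect_classes (g := boundary_of ends rot [set e | f e] \o crossing_side)).
  have [side_inv sideK side_invK] := crossing_side_bij.
  apply: eq_card => z; apply/imsetP/imsetP => -[x _ ->]; first by exists (crossing_side x).
  by exists (side_inv x); rewrite //= side_invK.
move=> x y; rewrite -connect_sideE //.
by rewrite (connect_bij crossing_side_bij (fun a b => esym (state_rel_medial f a b))).
Qed.

Lemma medial_weight (R : comUnitRingType) (A B : R) (f : {ffun E -> bool}) :
  (\prod_(e : E) edge_weight sgn A B e (f e)
   = A ^+ #|[set c | medial_state f c]| * B ^+ #|[set c | ~~ medial_state f c]|)%R.
Proof.
rewrite (reindex phi) /=; last exact: onW_bij phi_bij.
rewrite (bigID (medial_state f)) /= -!prodr_const; congr (_ * _)%R.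
  by apply: eq_big => c; rewrite ?inE // ffunE /edge_weight eq_sym => ->.
by apply: eq_big => c; rewrite ?inE // ffunE /edge_weight eq_sym => /negbTE ->.
Qed.
End AssociatedDiagram.

Theorem proposition4p3
  (V E : finType) (ends : E * bool -> V) (rot : {perm E * bool}) (sgn : E -> bool)
  (Hrot : is_rotation ends rot)
  (C : finType) (arc : C * 'I_4 -> C * 'I_4) (nfree : nat)
  (HD : associated ends rot sgn arc nfree)
  (R : comUnitRingType) (A B d : R) :
  Fpoly ends rot sgn A B d = bracket arc nfree A B d.
Proof.
case: HD => -> [phi [fl [phi_bij arc_medial]]].
rewrite Fpoly_state_sum /bracket (reindex (medial_state sgn phi)); last first.
  by apply: onW_bij; apply: medial_state_bij.
apply: eq_bigr => f _.
by rewrite (medial_weight _ phi_bij) (ncurves_medial Hrot phi_bij arc_medial).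
Qed.
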